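(* Let $(\mathbf{P},d_{\mathbf{P}})$ be a finite metric poset. For all $\mathbf{P}$-modules $M,N$, \[ d^{\mathrm{Int}\overline{\mathbf{P}}}_{\mathrm{GT}}\bigl(K(M),K(N)\bigr)\ \le\ d^{\mathbf{P}}_{\mathrm{GT}}(M,N). \]
   Context: Fix a field $k$; $\mathrm{vect}$ is the category of finite-dimensional $k$-vector spaces. Finite posets are categories with a unique morphism $x\to y$ iff $x\le y$; for a finite poset $\mathbf{S}$, an $\mathbf{S}$-module is a functor $\mathbf{S}\to\mathrm{vect}$; $g^*$ is precomposition with a monotone map $g$. $\overline{\mathbf{P}}=\mathbf{P}\sqcup\{\top\}$ with $x<\top$ for all $x\in\mathbf{P}$; its extended metric $d_{\overline{\mathbf{P}}}$ extends $d_{\mathbf{P}}$ by $d(x,\top)=d(\top,x)=\infty$ ($x\neq\top$), $d(\top,\top)=0$. For a finite poset $\mathbf{S}$ with (extended) metric, $\mathrm{Int}\,\mathbf{S}=\{(x,y)\in\mathbf{S}\times\mathbf{S}\mid x\le y\}$ with the product order and metric $d_{\mathrm{Int}\mathbf{S}}((x_1,y_1),(x_2,y_2))=\max\{d_{\mathbf{S}}(x_1,x_2),d_{\mathbf{S}}(y_1,y_2)\}$. For $M\in\mathrm{vect}^{\mathbf{P}}$, $\overline{M}$ extends $M$ to $\overline{\mathbf{P}}$ by $\overline{M}(\top)=0$, and $K(M)\in\mathrm{vect}^{\mathrm{Int}\overline{\mathbf{P}}}$ is given by $K(M)((x,y))=\ker\overline{M}(x\le y)$ with structure map for $(x_1,y_1)\le(x_2,y_2)$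 the restriction of $\overline{M}(x_1\le x_2)$. For a finite poset $\mathbf{S}$ with (possibly extended) metric $d_{\mathbf{S}}$ and $\mathbf{S}$-modules $A,B$: a Galois insertion $f:\mathbf{Q}\rightleftarrows\mathbf{S}:g$ is a pair of monotone maps with $f(u)\le x\iff u\le g(x)$ and $f\circ g=\mathrm{id}_{\mathbf{S}}$; a Galois coupling of $(A,B)$ is $(\mathbf{Q},f\dashv g,h\dashv i,\Gamma)$ with $\mathbf{Q}$ a finite poset, $f:\mathbf{Q}\rightleftarrows\mathbf{S}:g$ and $h:\mathbf{Q}\rightleftarrows\mathbf{S}:i$ Galois insertions, $\Gamma\in\mathrm{vect}^{\mathbf{Q}}$ with $g^*\Gamma\cong A$, $i^*\Gamma\cong B$; its cost is $\sup_{q\in\mathbf{Q}}d_{\mathbf{S}}(f(q),h(q))$; $d^{\mathbf{S}}_{\mathrm{GT}}(A,B)$ is the infimum of costs of couplings ($\infty$ if none). *)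

From HB Require Import structures.
From mathcomp Require Import all_boot all_order all_algebra.
From mathcomp Require Import classical_sets reals constructive_ereal ereal.

Set Implicit Arguments.
Unset Strict Implicit.
Unset Printing Implicit Defensive.
Import Order.TTheory GRing.Theory Num.Theory.
Local Open Scope ring_scope.

(* Modules over a poset: functors S -> vect (finite-dim k-spaces).     *)
(* The structure maps [mor x y] are only meaningful for x <= y; the   *)
(* values for incomparable pairs are irrelevant junk.                  *)
Record moddata (k : fieldType) (S : Type) := ModData {
  obj : S -> vectType k;
  mor : forall x y : S, 'Hom(obj x, obj y)
}.

Definition is_module (k : fieldType) (dS : Order.disp_t) (S : porderType dS)
    (A : moddata k S) : Prop :=
  (forall x : S, mor A x x = \1%VF) /\
  (forall x y z : S, (x <= y)%O -> (y <= z)%O ->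
     mor A x z = (mor A y z \o mor A x y)%VF).

Definition iso_pullback (k : fieldType) (dS : Order.disp_t) (S : porderType dS)
    (Q : Type) (Gamma : moddata k Q) (g : S -> Q) (A : moddata k S) : Prop :=
  exists phi : forall x : S, 'Hom(obj A x, obj Gamma (g x)),
    (forall x : S, bijective (phi x)) /\
    (forall x y : S, (x <= y)%O ->
       (phi y \o mor A x y)%VF = (mor Gamma (g x) (g y) \o phi x)%VF).

Definition galois_insertion (dQ dS : Order.disp_t)
    (Q : porderType dQ) (S : porderType dS) (f : Q -> S) (g : S -> Q) : Prop :=
  {homo f : u v / (u <= v)%O} /\ {homo g : x y / (x <= y)%O} /\
  (forall (u : Q) (x : S), (f u <= x)%O = (u <= g x)%O) /\
  cancel g f.

(* cost of a coupling: sup_q d(f q, h q)  (distances are >= 0, so the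
   supremum over a finite set is the iterated max starting at 0) *)
Definition coupling_cost (R : realType) (dQ : Order.disp_t) (Q : finPOrderType dQ)
    (S : Type) (dist : S -> S -> \bar R) (f h : Q -> S) : \bar R :=
  \big[Order.max/0%E]_(q : Q) dist (f q) (h q).

Definition GT_costs (R : realType) (k : fieldType) (dS : Order.disp_t)
    (S : finPOrderType dS) (dist : S -> S -> \bar R) (A B : moddata k S)
    : set (\bar R) :=
  [set c | exists (dQ : Order.disp_t) (Q : finPOrderType dQ)
             (f : Q -> S) (g : S -> Q) (h : Q -> S) (i : S -> Q)
             (Gamma : moddata k Q),
       [/\ galois_insertion f g /\ galois_insertion h i, is_module Gamma,
           iso_pullback Gamma g A, iso_pullback Gamma i B &
           c = coupling_cost dist f h]].

(* Galois transport distance: infimum of costs (+oo if no coupling) *)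
Definition dGT (R : realType) (k : fieldType) (dS : Order.disp_t)
    (S : finPOrderType dS) (dist : S -> S -> \bar R) (A B : moddata k S)
    : \bar R :=
  ereal_inf (GT_costs dist A B).

(* Pbar = P plus a top element; None plays the role of top.            *)
Definition topext (T : Type) := option T.

Section Topext.
Variables (dP : Order.disp_t) (P : finPOrderType dP).

HB.instance Definition _ := Finite.copy (topext P) (option P).

Definition topext_le (u v : topext P) : bool :=
  match u, v with
  | _, None => true
  | None, Some _ => false
  | Some x, Some y => (x <= y)%O
  end.

Lemma topext_le_refl : reflexive topext_le.
Proof. by case=> //= x; exact: Order.POrderTheory.le_refl. Qed.

Lemma topext_le_anti : antisymmetric topext_le.
Proof.
case=> [x|] [y|] //= /andP[h1 h2].
by rewrite (@Order.POrderTheory.le_anti _ _ x y) ?h1 ?h2.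
Qed.

Lemma topext_le_trans : transitive topext_le.
Proof.
case=> [y|] [x|] [z|] //=; exact: Order.POrderTheory.le_trans.
Qed.

HB.instance Definition _ := Order.Le_isPOrder.Build dP (topext P)
  topext_le_refl topext_le_anti topext_le_trans.

End Topext.

Definition intervals (dS : Order.disp_t) (S : finPOrderType dS) :=
  {p : S * S | (p.1 <= p.2)%O}.

Section Intervals.
Variables (dS : Order.disp_t) (S : finPOrderType dS).

HB.instance Definition _ := Finite.on (intervals S).

Definition int_le (p q : intervals S) : bool :=
  ((val p).1 <= (val q).1)%O && ((val p).2 <= (val q).2)%O.

Lemma int_le_refl : reflexive int_le.
Proof. by move=> p; rewrite /int_le !Order.POrderTheory.le_refl. Qed.

Lemma int_le_anti : antisymmetric int_le.
Proof.
move=> [[a b] hab] [[c d] hcd]; rewrite /int_le /= => /andP[/andP[h1 h2] /andP[h3 h4]].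
apply: val_inj => /=.
by rewrite (@Order.POrderTheory.le_anti _ _ a c) ?h1 ?h3 // (@Order.POrderTheory.le_anti _ _ b d) ?h2 ?h4.
Qed.

Lemma int_le_trans : transitive int_le.
Proof.
move=> q p r /andP[h1 h2] /andP[h3 h4]; apply/andP; split;
  [exact: Order.POrderTheory.le_trans h1 h3 | exact: Order.POrderTheory.le_trans h2 h4].
Qed.

HB.instance Definition _ := Order.Le_isPOrder.Build dS (intervals S)
  int_le_refl int_le_anti int_le_trans.

End Intervals.

Definition is_metric (R : realType) (T : Type) (d : T -> T -> R) : Prop :=
  [/\ forall x y, 0 <= d x y,
      forall x y, d x y = 0 <-> x = y,
      forall x y, d x y = d y x &
      forall x y z, d x z <= d x y + d y z].

Definition dist_topext (R : realType) (T : Type) (d : T -> T -> R)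
    (u v : topext T) : \bar R :=
  match u, v with
  | Some x, Some y => (d x y)%:E
  | None, None => 0%E
  | _, _ => +oo%E
  end.

Definition dist_int (R : realType) (dS : Order.disp_t) (S : finPOrderType dS)
    (d : S -> S -> \bar R) (p q : intervals S) : \bar R :=
  Order.max (d (val p).1 (val q).1) (d (val p).2 (val q).2).

Section Kernel.
Variables (k : fieldType) (dP : Order.disp_t) (P : finPOrderType dP).
Variable M : moddata k P.

Definition objbar (u : topext P) : vectType k :=
  match u with
  | Some x => obj M x
  | None => 'rV[k]_0
  end.

Definition morbar (u v : topext P) : 'Hom(objbar u, objbar v) :=
  match u as u', v as v' return 'Hom(objbar u', objbar v') with
  | Some x, Some y => mor M x y
  | None, None => \1%VF
  | _, _ => 0
  end.

Definition Mbar : moddata k (topext P) := ModData morbar.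

Definition Kobj (p : intervals (topext P)) : vectType k :=
  subvs_of (lker (morbar (val p).1 (val p).2)).

(* structure map: restriction of Mbar(x1 <= x2) to the kernels
   (written as  proj o Mbar(x1<=x2) o incl; for (x1,y1) <= (x2,y2) the
   image lies in the target kernel, so proj acts as the identity) *)
Definition Kmor (p q : intervals (topext P)) : 'Hom(Kobj p, Kobj q) :=
  (linfun (vsproj (lker (morbar (val q).1 (val q).2)))
     \o morbar (val p).1 (val q).1
     \o linfun (@vsval _ _ (lker (morbar (val p).1 (val p).2))))%VF.

Definition Kmod : moddata k (intervals (topext P)) := ModData Kmor.

End Kernel.

From HB Require Import structures.
From mathcomp Require Import all_boot all_order all_algebra.
From mathcomp Require Import classical_sets reals constructive_ereal ereal.
Import Order.TTheory GRing.Theory Num.Theory.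
Local Open Scope ring_scope.
Set Implicit Arguments.
Unset Strict Implicit.
Unset Printing Implicit Defensive.

(* A Galois coupling (Q, f -| g, h -| i, Gamma) of M and N induces one of K(M)
   and K(N): extend the four maps to the top-adjoined posets by top |-> top and
   apply them endpointwise to intervals.  These are again Galois insertions,
   K(Gamma) is a module, and a natural isomorphism g^* Gamma ~ M restricts to
   the kernels, giving (Int g)^* K(Gamma) ~ K(M).  As top is sent to top, at
   distance 0, no interval moves farther than the original cost. *)

Definition topext_map (A B : Type) (f : A -> B) (u : topext A) : topext B :=
  if u is Some x then Some (f x) else None.

Definition int_map (dA dB : Order.disp_t) (A : finPOrderType dA)
    (B : finPOrderType dB) (f : A -> B) (hf : {homo f : x y / (x <= y)%O})
    (p : intervals A) : intervals B :=
  exist _ (f (val p).1, f (val p).2) (hf _ _ (valP p)).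

Lemma int_leE (dA : Order.disp_t) (A : finPOrderType dA) (p q : intervals A) :
  (p <= q)%O = ((val p).1 <= (val q).1)%O && ((val p).2 <= (val q).2)%O.
Proof. by []. Qed.

Lemma topext_map_homo (dA dB : Order.disp_t) (A : finPOrderType dA)
    (B : finPOrderType dB) (f : A -> B) :
  {homo f : x y / (x <= y)%O} -> {homo topext_map f : u v / (u <= v)%O}.
Proof. by move=> hf [x|] [y|] //= /hf. Qed.

Section GaloisInsertion.
Variables (dA dB : Order.disp_t) (A : finPOrderType dA) (B : finPOrderType dB).

Lemma galois_insertion_topext_map (f : A -> B) (g : B -> A) :
  galois_insertion f g -> galois_insertion (topext_map f) (topext_map g).
Proof.
case=> hf [hg [fg_adj fK]]; split; first exact: topext_map_homo hf.
split; first exact: topext_map_homo hg.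
split; first by case=> [u|] [x|] //=; exact: fg_adj.
by case=> //= x; rewrite fK.
Qed.

Lemma galois_insertion_int_map (f : A -> B) (g : B -> A)
    (hf : {homo f : x y / (x <= y)%O}) (hg : {homo g : x y / (x <= y)%O}) :
  galois_insertion f g -> galois_insertion (int_map hf) (int_map hg).
Proof.
case=> _ [_ [fg_adj fK]]; split.
  by move=> p q /andP[le1 le2]; rewrite int_leE /= hf ?hf.
split; first by move=> p q /andP[le1 le2]; rewrite int_leE /= hg ?hg.
split; first by move=> p q; rewrite !int_leE /= !fg_adj.
by case=> [[x y] lexy]; apply: val_inj; rewrite /= !fK.
Qed.

End GaloisInsertion.

Lemma restrict_lfunE (K : fieldType) (X Y : vectType K) (U : {vspace X})
    (V : {vspace Y}) (F : 'Hom(X, Y)) (v : subvs_of U) :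
  (linfun (vsproj V) \o F \o linfun vsval)%VF v = vsproj V (F (vsval v)).
Proof. by rewrite !comp_lfunE !lfunE. Qed.

Section KernelModule.
Variables (k : fieldType) (dS : Order.disp_t) (S : finPOrderType dS).
Variables (A : moddata k S) (hA : is_module A).

Lemma hom_rV0_eq (V : vectType k) (f1 f2 : 'Hom(V, 'rV[k]_0)) : f1 = f2.
Proof. by apply/lfunP => v; rewrite (thinmx0 (f1 v)) (thinmx0 (f2 v)). Qed.

Lemma Mbar_module : is_module (Mbar A).
Proof.
split; first by case=> [x|] //=; exact: hA.1.
move=> u v [z|] /=; last by move=> _ _; exact: hom_rV0_eq.
by case: v => [y|] //; case: u => [x|] //; exact: hA.2.
Qed.

Lemma morbar_lker (p q : intervals (topext S)) v : (p <= q)%O ->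
  v \in lker (morbar A (val p).1 (val p).2) ->
  morbar A (val p).1 (val q).1 v \in lker (morbar A (val q).1 (val q).2).
Proof.
have [_ /= Abar_comp] := Mbar_module.
rewrite int_leE => /andP[le1 le2]; rewrite !memv_ker => /eqP v0.
rewrite -comp_lfunE -(Abar_comp _ _ _ le1 (valP q)).
by rewrite (Abar_comp _ _ _ (valP p) le2) comp_lfunE v0 linear0.
Qed.

Lemma Kmod_module : is_module (Kmod A).
Proof.
have [/= Abar_id Abar_comp] := Mbar_module.
split=> [p | p q r le_pq le_qr]; apply/lfunP => v; rewrite /= /Kmor.
  by rewrite restrict_lfunE Abar_id !id_lfunE vsvalK.
rewrite comp_lfunE !restrict_lfunE vsprojK; last exact: morbar_lker (subvsP v).
move: le_pq le_qr; rewrite !int_leE => /andP[le1 _] /andP[le2 _].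
by rewrite -comp_lfunE -Abar_comp.
Qed.

End KernelModule.

Section Pullback.
Variables (k : fieldType) (dQ dS : Order.disp_t).
Variables (Q : finPOrderType dQ) (S : finPOrderType dS).
Variables (G : moddata k Q) (A : moddata k S).

Lemma iso_pullback_Mbar (g : S -> Q) :
  iso_pullback G g A -> iso_pullback (Mbar G) (topext_map g) (Mbar A).
Proof.
case=> phi [phi_bij phi_nat].
pose phibar u : 'Hom(objbar A u, objbar G (topext_map g u)) :=
  if u is Some x then phi x else \1%VF.
exists phibar; split.
  case=> [x|] /=; first exact: phi_bij.
  by exists id => v; rewrite id_lfunE.
move=> u [y|] /=; last by move=> _; exact: hom_rV0_eq.
by case: u => [x|] //; exact: phi_nat.
Qed.

Section KernelIso.
Variables (g : topext S -> topext Q) (hg : {homo g : u v / (u <= v)%O}).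
Variable phi : forall u, 'Hom(objbar A u, objbar G (g u)).
Hypothesis phi_bij : forall u, bijective (phi u).
Hypothesis phi_nat : forall u v, (u <= v)%O ->
  (phi v \o morbar A u v)%VF = (morbar G (g u) (g v) \o phi u)%VF.

Lemma mem_lker_iso u v w : (u <= v)%O ->
  (phi u w \in lker (morbar G (g u) (g v))) = (w \in lker (morbar A u v)).
Proof.
move=> le_uv; rewrite !memv_ker -comp_lfunE -phi_nat // comp_lfunE.
have [phi_inv phiK _] := phi_bij v.
apply/eqP/eqP => [w0 | ->]; last exact: linear0.
by rewrite -[morbar A u v w]phiK w0 -(linear0 (phi v)) phiK.
Qed.

Definition phi_ker (p : intervals (topext S)) :
    'Hom(Kobj A p, Kobj G (int_map hg p)) :=
  (linfun (vsproj (lker (morbar G (g (val p).1) (g (val p).2))))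
   \o phi (val p).1
   \o linfun (@vsval _ _ (lker (morbar A (val p).1 (val p).2))))%VF.

Lemma phi_ker_bij p : bijective (phi_ker p).
Proof.
have [phi_inv phiK phiVK] := phi_bij (val p).1.
have mem_phi v : phi (val p).1 v \in lker (morbar G (g (val p).1) (g (val p).2))
    = (v \in lker (morbar A (val p).1 (val p).2)).
  exact: mem_lker_iso (valP p).
exists (fun w => vsproj (lker (morbar A (val p).1 (val p).2)) (phi_inv (vsval w))).
  move=> v; rewrite /phi_ker restrict_lfunE vsprojK ?phiK ?vsvalK //.
  by rewrite mem_phi subvsP.
move=> w; have w_ker : phi_inv (vsval w) \in lker (morbar A (val p).1 (val p).2).
  by rewrite -mem_phi phiVK subvsP.
by rewrite /phi_ker restrict_lfunE vsprojK // phiVK vsvalK.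
Qed.

Lemma phi_ker_nat (hA : is_module A) p q : (p <= q)%O ->
  (phi_ker q \o Kmor A p q)%VF =
  (Kmor G (int_map hg p) (int_map hg q) \o phi_ker p)%VF.
Proof.
move=> le_pq; apply/lfunP => v; rewrite /phi_ker /Kmor.
rewrite [LHS]comp_lfunE [RHS]comp_lfunE !restrict_lfunE.
rewrite vsprojK; last exact: morbar_lker (subvsP v).
rewrite vsprojK; last by rewrite mem_lker_iso ?(valP p) // subvsP.
move: le_pq; rewrite int_leE => /andP[le1 _].
by rewrite -comp_lfunE phi_nat // comp_lfunE.
Qed.

End KernelIso.

Lemma iso_pullback_Kmod (g : topext S -> topext Q)
    (hg : {homo g : u v / (u <= v)%O}) :
  is_module A -> iso_pullback (Mbar G) g (Mbar A) ->
  iso_pullback (Kmod G) (int_map hg) (Kmod A).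
Proof.
move=> hA [phi [phi_bij phi_nat]].
exists (phi_ker hg phi); split; first exact: phi_ker_bij.
exact: phi_ker_nat.
Qed.

End Pullback.

Lemma coupling_cost_int_map (R : realType) (dQ dS : Order.disp_t)
    (Q : finPOrderType dQ) (S : finPOrderType dS) (d : S -> S -> R)
    (f h : Q -> S) (hf : {homo topext_map f : u v / (u <= v)%O})
    (hh : {homo topext_map h : u v / (u <= v)%O}) :
  (coupling_cost (dist_int (dist_topext d)) (int_map hf) (int_map hh)
     <= coupling_cost (fun x y => (d x y)%:E) f h)%E.
Proof.
set C := coupling_cost _ f h.
have C_ge0 : (0 <= C)%E by exact: bigmax_ge_id.
have le_C u : (dist_topext d (topext_map f u) (topext_map h u) <= C)%E.
  by case: u => [x|] //=; exact: (le_bigmax _ (fun q => (d (f q) (h q))%:E)).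
by apply: bigmax_le => // p _; rewrite /dist_int ge_max !le_C.
Qed.

Theorem proposition6p12 (R : realType) (k : fieldType)
    (dP : Order.disp_t) (P : finPOrderType dP) (d : P -> P -> R)
    (hd : is_metric d) (M N : moddata k P)
    (hM : is_module M) (hN : is_module N) :
  (dGT (dist_int (dist_topext d)) (Kmod M) (Kmod N)
     <= dGT (fun x y => (d x y)%:E) M N)%E.
Proof.
apply/ereal_infP => _ [dQ [Q [f [g [h [i [G [[gi_f gi_h] hG gM iN ->]]]]]]]].
have [hf [hg _]] := gi_f; have [hh [hi _]] := gi_h.
pose Kf := int_map (topext_map_homo hf); pose Kg := int_map (topext_map_homo hg).
pose Kh := int_map (topext_map_homo hh); pose Ki := int_map (topext_map_homo hi).
apply: ge_ereal_inf; exists (coupling_cost (dist_int (dist_topext d)) Kf Kh).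
  exists dQ, (intervals (topext Q)), Kf, Kg, Kh, Ki, (Kmod G); split.
  - by split; apply: galois_insertion_int_map; apply: galois_insertion_topext_map.
  - exact: Kmod_module.
  - exact: iso_pullback_Kmod hM (iso_pullback_Mbar gM).
  - exact: iso_pullback_Kmod hN (iso_pullback_Mbar iN).
  - by [].
exact: coupling_cost_int_map.
Qed.
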